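(* Suppose the PL condition, KKT regularity, and projected-gradient injectivity (below) hold for all $t=1,\dots,T$, observations are noiseless, and the latent parameters are stationary: $\boldsymbol{\theta}_t\equiv\boldsymbol{\theta}$ for all $t$. Then for $\boldsymbol{\theta}'\in\Theta$, $$\sum_{t=1}^T\ell_t(\boldsymbol{\theta}')=0\;\Longrightarrow\;\boldsymbol{\theta}'=\boldsymbol{\theta}.$$
   Context: Setting: for periods $t=1,\dots,T$, data $\mathbf{B}_t\in\mathbb{R}^{k\times n}$, $\mathbf{q}_t\in\mathbb{R}^k_{+}$ define $\mathcal{X}_t=\{\mathbf{x}\in\mathbb{R}^n_+:\mathbf{B}_t\mathbf{x}\le\mathbf{q}_t\}$. $\Theta\subset\mathbb{R}^p$ is a parameter set, $c_t:\mathbb{R}^n\times\Theta\to\mathbb{R}$ is differentiable in $\mathbf{x}$, and allocations $\mathbf{x}_t\in\mathbb{R}^n_+$ are observed. $\mathrm{P}_t:=I-\mathbf{B}_t^\top(\mathbf{B}_t\mathbf{B}_t^\top)^\dagger\mathbf{B}_t$. The inverse loss is $$\ell_t(\boldsymbol{\theta}) := \|(\mathbf{B}_t\mathbf{x}_t-\mathbf{q}_t)_+\|^2+\inf_{\boldsymbol{\lambda}_t\ge 0}\|\nabla_{\mathbf{x}}c_t(\mathbf{x}_t;\boldsymbol{\theta})+\mathbf{B}_t^\top\boldsymbol{\lambda}_t\|^2+|\boldsymbol{\lambda}_t^\top(\mathbf{B}_t\mathbf{x}_t-\mathbf{q}_t)|,$$ with $\boldsymbol{\lambda}_t\ge0$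 the multiplier appearing in the dual feasibility term. PL condition: there is $\mu>0$ with $\frac{1}{2\mu}\|\nabla_{\mathbf{x}}c_t(\mathbf{x};\boldsymbol{\theta})\|^2\ge c_t(\mathbf{x};\boldsymbol{\theta})-\min_{\mathbf{y}\in\mathcal{X}_t}c_t(\mathbf{y};\boldsymbol{\theta})$ for all $t$, $\boldsymbol{\theta}\in\Theta$, $\mathbf{x}\in\mathbb{R}^n_+$. KKT regularity: for each $t$ there exist a latent parameter $\boldsymbol{\theta}_t\in\Theta$ and $\boldsymbol{\lambda}_t\in\mathbb{R}^k_+$ with $\nabla_{\mathbf{x}}c_t(\mathbf{x}_t;\boldsymbol{\theta}_t)+\mathbf{B}_t^\top\boldsymbol{\lambda}_t=\mathbf{0}$, $\mathbf{B}_t\mathbf{x}_t\le\mathbf{q}_t$, $\boldsymbol{\lambda}_t^\top(\mathbf{B}_t\mathbf{x}_t-\mathbf{q}_t)=0$. Projected-gradient injectivity: for each $t$, $\boldsymbol{\theta}\mapsto\mathrm{P}_t\nabla_{\mathbf{x}}c_t(\mathbf{x}_t;\boldsymbol{\theta})$ is injective on $\Theta$. *)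

From HB Require Import structures.
From mathcomp Require Import all_boot all_order all_algebra.
From mathcomp Require Import all_classical all_reals all_analysis.
Set Implicit Arguments. Unset Strict Implicit. Unset Printing Implicit Defensive.
Import Order.TTheory GRing.Theory Num.Theory.
Import numFieldNormedType.Exports.
Local Open Scope classical_set_scope.
Local Open Scope ring_scope.

Section Defs.
Variable R : realType.

Definition sqnorm (m : nat) (v : 'cV[R]_m) : R := \sum_(i < m) (v i 0) ^+ 2.

Definition dotv (m : nat) (u v : 'cV[R]_m) : R := \sum_(i < m) u i 0 * v i 0.

Definition pospart (m : nat) (v : 'cV[R]_m) : 'cV[R]_m := map_mx (fun a => Num.max a 0) v.

Definition lev (m : nat) (u v : 'cV[R]_m) : Prop := forall i, u i 0 <= v i 0.
Definition nonneg (m : nat) (v : 'cV[R]_m) : Prop := lev 0 v.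

Definition is_mpinv (a b : nat) (A : 'M[R]_(a, b)) (X : 'M[R]_(b, a)) : Prop :=
  [/\ A *m X *m A = A, X *m A *m X = X, (A *m X)^T = A *m X & (X *m A)^T = X *m A].
Definition mpinv (a b : nat) (A : 'M[R]_(a, b)) : 'M[R]_(b, a) :=
  xget 0 [set X | is_mpinv A X].

Definition projB (k n : nat) (B : 'M[R]_(k, n)) : 'M[R]_n :=
  1%:M - B^T *m mpinv (B *m B^T) *m B.

Definition gradx (n : nat) (f : 'cV[R]_n -> R) (x : 'cV[R]_n) : 'cV[R]_n :=
  \col_i ('D_(delta_mx i 0 : 'cV[R]_n) f x).

Definition feas (k n : nat) (B : 'M[R]_(k, n)) (q : 'cV[R]_k) : set 'cV[R]_n :=
  [set x | nonneg x /\ lev (B *m x) q].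

Definition inv_loss (k n p : nat) (B : 'M[R]_(k, n)) (q : 'cV[R]_k)
  (c : 'cV[R]_n -> 'cV[R]_p -> R) (x : 'cV[R]_n) (th : 'cV[R]_p) : R :=
  sqnorm (pospart (B *m x - q)) +
  inf [set r | exists lam : 'cV[R]_k, nonneg lam /\
        r = sqnorm (gradx (fun y => c y th) x + B^T *m lam)
            + `| dotv lam (B *m x - q) |].

End Defs.

From HB Require Import structures.
From mathcomp Require Import all_boot all_order all_algebra.
From mathcomp Require Import all_classical all_reals all_analysis.
Set Implicit Arguments. Unset Strict Implicit. Unset Printing Implicit Defensive.
Import Order.TTheory GRing.Theory Num.Theory.
Import numFieldNormedType.Exports.
Local Open Scope classical_set_scope.
Local Open Scope ring_scope.

(* If the loss of period t vanishes at theta', so does its infimum term.  The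
   matrix P_t is the orthogonal projection onto the kernel of B_t, so it kills
   B_t^T lam and does not increase norms: |P_t grad c_t(x_t; theta')|^2 is
   below every term of that infimum, hence P_t grad c_t(x_t; theta') = 0.  KKT
   stationarity gives P_t grad c_t(x_t; theta) = 0 as well, and injectivity of
   the projected gradient yields theta' = theta.  One period suffices.  Since
   [mpinv] is defined by choice, the projection properties of P_t need the
   existence of Moore-Penrose inverses, given by Urquhart's formula. *)

Section GramCancel.
Variable R : realFieldType.

Lemma trmx_mul_self_eq0 a b (N : 'M[R]_(a, b)) : N^T *m N = 0 -> N = 0.
Proof.
move=> NN0; apply/matrixP => i j; rewrite mxE.
have /= := congr1 (fun M : 'M[R]_b => M j j) NN0; rewrite !mxE => diag0.
have sq_ge0 l : true -> 0 <= N^T j l * N l j by rewrite mxE -expr2 sqr_ge0.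
have /eqP := psumr_eq0P sq_ge0 diag0 (i := i) isT.
by rewrite mxE mulf_eq0 orbb => /eqP.
Qed.

Lemma mulmx_gram_cancel_l a b c (N : 'M[R]_(a, b)) (Y Z : 'M[R]_(b, c)) :
  N^T *m N *m Y = N^T *m N *m Z -> N *m Y = N *m Z.
Proof.
move=> eqYZ; apply/eqP; rewrite -subr_eq0 -mulmxBr; apply/eqP/trmx_mul_self_eq0.
by rewrite trmx_mul -!mulmxA (mulmxA N^T) mulmxBr eqYZ subrr mulmx0.
Qed.

Lemma mulmx_gram_cancel_r a b c (N : 'M[R]_(a, b)) (Y Z : 'M[R]_(c, a)) :
  Y *m (N *m N^T) = Z *m (N *m N^T) -> Y *m N = Z *m N.
Proof.
move=> /(congr1 trmx); rewrite !trmx_mul !trmxK => eqYZ.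
have := mulmx_gram_cancel_l (N := N^T) (Y := Y^T) (Z := Z^T); rewrite trmxK.
by move=> /(_ eqYZ) /(congr1 trmx); rewrite !trmx_mul !trmxK.
Qed.

(* Cancelling the Gram matrix [A^T A] against a generalised inverse [G] of it
   makes [G A^T] a {1,2,3}-inverse of [A]. *)
Lemma inverse123_exists a b (A : 'M[R]_(a, b)) : exists X : 'M[R]_(b, a),
  [/\ A *m X *m A = A, X *m A *m X = X & (A *m X)^T = A *m X].
Proof.
have [G gramG] : exists G, A^T *m A *m G *m A^T *m A = A^T *m A.
  by exists (pinvmx (A^T *m A)); rewrite -mulmxA; apply/mulmxKpV/submx_refl.
have AGA : A *m (G *m A^T *m A) = A *m 1%:M.
  by apply: mulmx_gram_cancel_l; rewrite mulmx1 !mulmxA gramG.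
have AGtA : A *m (G^T *m A^T *m A) = A *m 1%:M.
  apply: mulmx_gram_cancel_l; rewrite mulmx1 !mulmxA.
  by have := congr1 trmx gramG; rewrite !trmx_mul !trmxK !mulmxA.
rewrite mulmx1 !mulmxA in AGA AGtA.
have AtAG : A^T *m A *m G *m A^T = A^T.
  by have := congr1 trmx AGtA; rewrite !trmx_mul !trmxK !mulmxA.
have LtL : (A *m (G *m A^T))^T *m (A *m (G *m A^T)) = A *m (G *m A^T).
  by rewrite !trmx_mul trmxK !mulmxA AGtA.
exists (G *m A^T); split.
- by rewrite !mulmxA AGA.
- by rewrite -[in RHS]AtAG !mulmxA.
- by rewrite -{1}LtL trmx_mul trmxK LtL.
Qed.

End GramCancel.

Section RowSpaceProjection.
Variable R : realType.

(* Urquhart: [Y A X] is the Moore-Penrose inverse when [X] is a {1,2,3}- and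
   [Y] a {1,2,4}-inverse of [A]. *)
Lemma mpinv_exists a b (A : 'M[R]_(a, b)) : exists X, is_mpinv A X.
Proof.
have [X [AXA XAX AXs]] := inverse123_exists A.
have [Y' [AYA' YAY' AYs']] := inverse123_exists A^T.
set Y := Y'^T.
have AYA : A *m Y *m A = A.
  by have := congr1 trmx AYA'; rewrite !trmx_mul !trmxK !mulmxA.
have YAY : Y *m A *m Y = Y.
  by have := congr1 trmx YAY'; rewrite !trmx_mul !trmxK !mulmxA.
have YAs : (Y *m A)^T = Y *m A.
  by rewrite /Y trmx_mul !trmxK -AYs' trmx_mul trmxK.
have YAXA : Y *m A *m X *m A = Y *m A by rewrite -!mulmxA (mulmxA A) AXA.
exists (Y *m A *m X); split.
- by rewrite !mulmxA AYA AXA.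
- by rewrite !mulmxA YAXA YAY.
- by rewrite !mulmxA AYA.
- by rewrite YAXA.
Qed.

Lemma mpinvP a b (A : 'M[R]_(a, b)) : is_mpinv A (mpinv A).
Proof. by rewrite /mpinv; apply: xgetPex; exact: mpinv_exists. Qed.

Definition rowspace_proj k n (B : 'M[R]_(k, n)) : 'M[R]_n :=
  B^T *m mpinv (B *m B^T) *m B.

Lemma projBE k n (B : 'M[R]_(k, n)) : projB B = 1%:M - rowspace_proj B.
Proof. by []. Qed.

Lemma rowspace_projP k n (B : 'M[R]_(k, n)) (Q := rowspace_proj B) :
  [/\ Q^T = Q, Q *m Q = Q & Q *m B^T = B^T].
Proof.
rewrite /Q /rowspace_proj; have [MXM XMX _ _] := mpinvP (B *m B^T).
set X := mpinv _ in MXM XMX *.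
have MXB : B *m B^T *m X *m B = B.
  by rewrite -[RHS]mul1mx; apply: mulmx_gram_cancel_r; rewrite MXM mul1mx.
have BtXtMt : B^T *m X^T *m B *m B^T = B^T.
  by have := congr1 trmx MXB; rewrite !trmx_mul !trmxK !mulmxA.
have Qs : B^T *m X^T *m B = B^T *m X *m B.
  by rewrite -{2}MXB !mulmxA BtXtMt.
split.
- by rewrite !trmx_mul trmxK mulmxA Qs.
- by rewrite -[in RHS]XMX !mulmxA.
- by rewrite -Qs BtXtMt.
Qed.

Lemma projB_mul_trmx k n (B : 'M[R]_(k, n)) : projB B *m B^T = 0.
Proof.
by have [_ _ QBt] := rowspace_projP B; rewrite projBE mulmxBl mul1mx QBt subrr.
Qed.

Lemma sqnormE m (v : 'cV[R]_m) : sqnorm v = (v^T *m v) 0 0.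
Proof. by rewrite /sqnorm mxE; apply: eq_bigr => i _; rewrite mxE expr2. Qed.

Lemma sqnorm_ge0 m (v : 'cV[R]_m) : 0 <= sqnorm v.
Proof. by apply: sumr_ge0 => i _; rewrite sqr_ge0. Qed.

Lemma sqnorm_eq0 m (v : 'cV[R]_m) : sqnorm v = 0 -> v = 0.
Proof.
move=> v0; apply: trmx_mul_self_eq0; apply/matrixP => i j.
by rewrite (ord1 i) (ord1 j) -sqnormE v0 !mxE.
Qed.

Lemma sqnorm_orthogonal_split m (Q : 'M[R]_m) (u : 'cV[R]_m) :
  Q^T = Q -> Q *m Q = Q ->
  sqnorm u = sqnorm ((1%:M - Q) *m u) + sqnorm (Q *m u).
Proof.
move=> Qs QQ.
have PtP : (1%:M - Q)^T *m (1%:M - Q) = 1%:M - Q.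
  rewrite [(1%:M - Q)^T]linearB /= tr_scalar_mx Qs.
  by rewrite mulmxBl mul1mx mulmxBr mulmx1 QQ subrr subr0.
have uTu : u^T *m u =
    ((1%:M - Q) *m u)^T *m ((1%:M - Q) *m u) + (Q *m u)^T *m (Q *m u).
  rewrite !trmx_mul -!mulmxA (mulmxA _ _ u) PtP (mulmxA Q^T) Qs QQ.
  by rewrite -mulmxDr -mulmxDl subrK mul1mx.
by rewrite !sqnormE uTu [LHS]mxE.
Qed.

Lemma sqnorm_projB_le k n (B : 'M[R]_(k, n)) (u : 'cV[R]_n) :
  sqnorm (projB B *m u) <= sqnorm u.
Proof.
have [Qs QQ _] := rowspace_projP B.
by rewrite [leRHS](sqnorm_orthogonal_split u Qs QQ) projBE lerDl sqnorm_ge0.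
Qed.

Lemma projB_mul_eq0 k n (B : 'M[R]_(k, n)) (g : 'cV[R]_n) (lam : 'cV[R]_k) :
  g + B^T *m lam = 0 -> projB B *m g = 0.
Proof.
move=> /eqP; rewrite addr_eq0 => /eqP ->.
by rewrite mulmxN mulmxA projB_mul_trmx mul0mx oppr0.
Qed.

End RowSpaceProjection.

Section InverseLoss.
Variables (R : realType) (k n p : nat) (B : 'M[R]_(k, n)) (q : 'cV[R]_k).
Variables (c : 'cV[R]_n -> 'cV[R]_p -> R) (x : 'cV[R]_n) (th : 'cV[R]_p).

Let g := gradx (fun y => c y th) x.
Let residuals := [set r | exists lam : 'cV[R]_k, nonneg lam /\
  r = sqnorm (g + B^T *m lam) + `| dotv lam (B *m x - q) |].

Let residuals_neq0 : residuals !=set0.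
Proof. by eexists; exists 0; split. Qed.

Let projB_grad_lbound : lbound residuals (sqnorm (projB B *m g)).
Proof.
move=> _ [lam [_ ->]].
have -> : projB B *m g = projB B *m (g + B^T *m lam).
  by rewrite mulmxDr mulmxA projB_mul_trmx mul0mx addr0.
by apply: le_trans (sqnorm_projB_le _ _) _; rewrite lerDl normr_ge0.
Qed.

Lemma inv_loss_ge0 : 0 <= inv_loss B q c x th.
Proof.
apply: addr_ge0; first exact: sqnorm_ge0.
apply: le_trans (sqnorm_ge0 (projB B *m g)) _.
exact: lb_le_inf residuals_neq0 projB_grad_lbound.
Qed.

Lemma inv_loss_eq0_projB_grad :
  inv_loss B q c x th = 0 -> projB B *m gradx (fun y => c y th) x = 0.
Proof.
move=> loss0; apply: sqnorm_eq0; apply/eqP; rewrite eq_le sqnorm_ge0 andbT.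
apply: le_trans (lb_le_inf residuals_neq0 projB_grad_lbound) _.
have infE : inf residuals = - sqnorm (pospart (B *m x - q)).
  by apply/eqP; rewrite -addr_eq0 addrC; apply/eqP.
by rewrite infE oppr_le0 sqnorm_ge0.
Qed.

End InverseLoss.

Theorem corollary1 (R : realType) (T k n p : nat)
  (B : 'I_T -> 'M[R]_(k, n)) (q : 'I_T -> 'cV[R]_k)
  (Theta : set 'cV[R]_p)
  (c : 'I_T -> 'cV[R]_n -> 'cV[R]_p -> R)
  (x : 'I_T -> 'cV[R]_n)
  (theta : 'cV[R]_p)
  (HT : (0 < T)%N)
  (Hq : forall t, nonneg (q t))
  (Hx : forall t, nonneg (x t))
  (Hdiff : forall t th y, differentiable (fun z => c t z th) y)
  (* PL condition *)
  (HPL : exists mu : R, 0 < mu /\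
     forall t th y, th \in Theta -> nonneg y ->
       (2 * mu)^-1 * sqnorm (gradx (fun z => c t z th) y)
         >= c t y th - inf [set c t z th | z in feas (B t) (q t)])
  (* KKT regularity with stationary latent parameter theta_t = theta *)
  (Htheta : theta \in Theta)
  (HKKT : forall t, exists lam : 'cV[R]_k, nonneg lam /\
     gradx (fun z => c t z theta) (x t) + (B t)^T *m lam = 0 /\
     lev (B t *m x t) (q t) /\
     dotv lam (B t *m x t - q t) = 0)
  (* projected-gradient injectivity *)
  (Hinj : forall t, {in Theta &, injective
     (fun th => projB (B t) *m gradx (fun z => c t z th) (x t))}) :
  forall theta' : 'cV[R]_p, theta' \in Theta ->
    \sum_(t < T) inv_loss (B t) (q t) (c t) (x t) theta' = 0 ->
    theta' = theta.
Proof.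
move=> theta' Htheta' loss0.
pose t0 := Ordinal HT.
have loss_t0 : inv_loss (B t0) (q t0) (c t0) (x t0) theta' = 0.
  by apply: (psumr_eq0P _ loss0) => // t _; exact: inv_loss_ge0.
have [lam [_ [stationary _]]] := HKKT t0.
apply: (Hinj t0) => //.
by rewrite /= (inv_loss_eq0_projB_grad loss_t0) (projB_mul_eq0 stationary).
Qed.
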